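(* Let $\omega\in[n]^*$, $j\in[n]$, and $\sigma\in\mathrm{Sym}_n$ with $\sigma(j)=n$. Then \[B_\omega=\mathrm{Comp}_0\big(L^\circ(a^j_\omega;M_\omega,\sigma)\setminus L^\circ(0;M_\omega,\sigma)\big)\] and \[B_{\omega*j}=\mathrm{Comp}_0\big(L(a^j_\omega;M_\omega,\sigma)\setminus L^\circ(0;M_\omega,\sigma)\big).\]
   Context: Let $[n]=\{1,\dots,n\}$, $e_1,\dots,e_n$ the standard basis of $\mathbb{Z}^n$; $\varepsilon$ is the empty word, $*$ concatenation. For words $\omega$ over $[n]$ define recursively $a^i_\omega,\delta^i_\omega\in\mathbb{Z}^n$: $a^i_\varepsilon=\delta^i_\varepsilon=e_i$; $a^i_{\omega*j}=a^i_\omega$ if $i\ne j$, $a^j_{\omega*j}=a^j_\omega+\delta^j_\omega$; $\delta^j_{\omega*j}=\delta^j_\omega$, $\delta^i_{\omega*j}=\delta^i_\omega-\delta^j_\omega$ for $i\ne j$. Let $B_\varepsilon=\{0\}$, $B_{\omega*j}=B_\omega+\{0,\delta^j_\omega\}$ (Minkowski sum). Let $M_\omega=(\delta^1_\omega\ \cdots\ \delta^n_\omega)^{-1}$ (inverse of the matrix with columns $\delta^i_\omega$). $\mathrm{Sym}_n$ acts on $\mathbb{Z}^n$ by $\sigma\cdot x=(x_{\sigma^{-1}(i)})_{i\in[n]}$. Let $\le_{\mathrm{lex}}$ be the lexicographic order on $\mathbb{Z}^n$ (comparing first coordinates first), and write $x\le_{\sigma}y$ iff $\sigma x\le_{\mathrm{lex}}\sigma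 y$, and $x<_\sigma y$ iff $\sigma x<_{\mathrm{lex}}\sigma y$. For $P\in\mathbb{Z}^n$, $M\in\mathbb{Z}^{n\times n}_{\ge0}$ with $\det M=1$ and $\sigma\in\mathrm{Sym}_n$, let $L(P;M,\sigma)=\{x\in\mathbb{Z}^n: Mx\le_\sigma MP\}$ and $L^\circ(P;M,\sigma)=\{x\in\mathbb{Z}^n: Mx<_\sigma MP\}$. A subset of $\mathbb{Z}^n$ is regarded as a graph by joining two elements iff their Euclidean distance is $1$; $\mathrm{Comp}_0(X)$ is the connected component of $X$ containing $0$. *)

(* Vectors of Z^n are column vectors 'cV[int]_n, indices [n] are 'I_n
   (index i : 'I_n stands for i+1), words are seq 'I_n, Sym_n is 'S_n. *)
From mathcomp Require Import all_boot all_order all_algebra all_fingroup.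
Set Implicit Arguments. Unset Strict Implicit. Unset Printing Implicit Defensive.
Import Order.TTheory GRing.Theory Num.Theory.
Local Open Scope ring_scope.

Section Defs.
Variable n : nat.
Notation vec := 'cV[int]_n.

Definition ebasis (i : 'I_n) : vec := delta_mx i 0.

(* state (a^i_w, delta^i_w, B_w) *)
Definition state := (('I_n -> vec) * ('I_n -> vec) * (vec -> Prop))%type.

Definition state0 : state := (ebasis, ebasis, fun x => x = 0).

Definition step (s : state) (j : 'I_n) : state :=
  let: (a, d, B) := s in
  (fun i => if i == j then a j + d j else a i,
   fun i => if i == j then d j else d i - d j,
   fun x => exists b, B b /\ (x = b \/ x = b + d j)).

Definition wstate (w : seq 'I_n) : state := foldl step state0 w.

Definition avec (w : seq 'I_n) (i : 'I_n) : vec := (wstate w).1.1 i.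
Definition dvec (w : seq 'I_n) (i : 'I_n) : vec := (wstate w).1.2 i.
Definition Bset (w : seq 'I_n) : vec -> Prop := (wstate w).2.

Definition Mmat (w : seq 'I_n) : 'M[int]_n :=
  invmx (\matrix_(r < n, c < n) dvec w c r 0).

Definition pact (s : 'S_n) (x : vec) : vec := \col_i x ((s^-1)%g i) 0.

Definition lex_lt (x y : vec) : Prop :=
  exists i : 'I_n, x i 0 < y i 0 /\ forall k : 'I_n, (k < i)%N -> x k 0 = y k 0.
Definition lex_le (x y : vec) : Prop := x = y \/ lex_lt x y.

Definition Lset (P : vec) (M : 'M[int]_n) (s : 'S_n) : vec -> Prop :=
  fun x => lex_le (pact s (M *m x)) (pact s (M *m P)).
Definition Loset (P : vec) (M : 'M[int]_n) (s : 'S_n) : vec -> Prop :=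
  fun x => lex_lt (pact s (M *m x)) (pact s (M *m P)).

Definition setminus (X Y : vec -> Prop) : vec -> Prop := fun x => X x /\ ~ Y x.

Definition adj : rel vec := fun x y => (\sum_i (x i 0 - y i 0) ^+ 2) == 1.

(* connected component of 0 in X (empty if 0 is not in X) *)
Definition Comp0 (X : vec -> Prop) : vec -> Prop :=
  fun y => exists p : seq vec,
    [/\ X 0, forall z, z \in p -> X z, path adj 0 p & last 0 p = y].

End Defs.

From mathcomp Require Import all_boot all_order all_algebra all_fingroup.
From Stdlib Require Import Classical FunctionalExtensionality PropExtensionality.
From mathcomp Require Import zify ring.
Set Implicit Arguments. Unset Strict Implicit. Unset Printing Implicit Defensive.
Import Order.TTheory GRing.Theory Num.Theory.
Local Open Scope ring_scope.

(* Read words from the front: prepending a letter k transforms the whole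
   state (a, δ, B) of a word by the unimodular shear F_k (F_k e_k = e_k and
   F_k e_l = e_l - e_k) followed, for a and B, by a translation by e_k.  Hence
   the matrix D_w of δ-vectors is unimodular, M_w = D_w^-1 and M_w δ^i_w = e_i.
   By induction on w, B_w contains 0 and the corner C = a^j_w - δ^j_w, is
   connected, lies in the box {b | b and C - b in cone w}, where cone w is the
   monoid generated by the δ's, and every unit step leaving B_w ends in
   C + (cone w minus 0) or in -(cone w minus 0).  When σ(j) = n the order
   x <= y iff σ(M_w x) <=lex σ(M_w y) is translation invariant, and all δ-vectors
   of w*j (namely δ_j and δ_i - δ_j) are positive for it.  Hence the box lies in
   the set X of the statement while the exit points do not, which identifies
   B_w, resp. B_{w*j} (whose corner is a^j_w), with the component of 0 in X. *)

Section LexOrder.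
Variable n : nat.
Implicit Types (x y u v : 'cV[int]_n) (s : 'S_n).

Lemma lex_ltE x y : lex_lt x y <-> lex_lt 0 (y - x).
Proof.
split=> -[i [lt_i eq_pre]]; exists i; move: lt_i; rewrite !mxE ?subr_gt0 => lt_i.
  by split=> // k lt_ki; rewrite !mxE (eq_pre k lt_ki) subrr.
by split=> // k /eq_pre /eqP; rewrite !mxE eq_sym subr_eq0 => /eqP.
Qed.

Lemma lexpos_add u v : lex_lt 0 u -> lex_lt 0 v -> lex_lt 0 (u + v).
Proof.
move=> [i [ui u0]] [k [vk v0]].
rewrite !mxE in ui vk.
have {}u0 (m : 'I_n) : (m < i)%N -> u m 0 = 0 by move/u0; rewrite mxE.
have {}v0 (m : 'I_n) : (m < k)%N -> v m 0 = 0 by move/v0; rewrite mxE.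
exists (if (i <= k)%N then i else k); rewrite !mxE; split.
  case: (ltngtP i k) => [lt_ik|lt_ki|/val_inj eq_ik].
  - by rewrite (v0 _ lt_ik) addr0.
  - by rewrite (u0 _ lt_ki) add0r.
  - by rewrite addr_gt0 // eq_ik.
move=> m lt_m; have [lt_mi lt_mk] : (m < i)%N /\ (m < k)%N by case: (leqP i k) lt_m; lia.
by rewrite !mxE u0 // v0 // addr0.
Qed.

Lemma lexpos0 : ~ lex_lt 0 (0 : 'cV[int]_n).
Proof. by move=> [i []]; rewrite mxE ltxx. Qed.

Lemma lexpos_ebasis (p : 'I_n) : lex_lt 0 (ebasis p).
Proof.
exists p; rewrite /ebasis !mxE !eqxx; split=> // k lt_kp.
by rewrite !mxE (ltn_eqF lt_kp : (k == p) = false).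
Qed.

Lemma lexpos_ebasisB (p q : 'I_n) : (p < q)%N -> lex_lt 0 (ebasis p - ebasis q).
Proof.
move=> lt_pq; exists p; rewrite /ebasis !mxE !eqxx (ltn_eqF lt_pq : (p == q) = false).
split=> // k lt_kp; have lt_kq := ltn_trans lt_kp lt_pq.
by rewrite !mxE (ltn_eqF lt_kp : (k == p) = false) (ltn_eqF lt_kq : (k == q) = false) subrr.
Qed.

Lemma pactB s x y : pact s (x - y) = pact s x - pact s y.
Proof. by apply/matrixP => i c; rewrite !mxE. Qed.

Lemma pactD s x y : pact s (x + y) = pact s x + pact s y.
Proof. by apply/matrixP => i c; rewrite !mxE. Qed.

Lemma pact0 s : pact s 0 = 0 :> 'cV[int]_n.
Proof. by apply/matrixP => i c; rewrite !mxE. Qed.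

Lemma pact_inj s x y : pact s x = pact s y -> x = y.
Proof.
move=> eq_xy; apply/matrixP => i c; rewrite (ord1 c).
by have := congr1 (fun z : 'cV[int]_n => z (s i) 0) eq_xy; rewrite /= !mxE permK.
Qed.

Lemma pact_ebasis s (i : 'I_n) : pact s (ebasis i) = ebasis (s i).
Proof.
apply/matrixP => p c; rewrite (ord1 c) !mxE !andbT; congr ((_ : bool)%:R); apply/eqP/eqP.
  by move=> <-; rewrite permKV.
by move=> ->; rewrite permK.
Qed.

End LexOrder.

(* [lex_pos M s v]: v is positive for the order x < y iff σ(Mx) <lex σ(My);
   the sets L and L° of the statement are intervals of this order. *)
Definition lex_pos n (M : 'M[int]_n) (s : 'S_n) (v : 'cV[int]_n) : Prop :=
  lex_lt 0 (pact s (M *m v)).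

Section LexPositivity.
Variables (n : nat) (M : 'M[int]_n) (s : 'S_n).
Implicit Types (x u v P : 'cV[int]_n).

Lemma lex_posD u v : lex_pos M s u -> lex_pos M s v -> lex_pos M s (u + v).
Proof. by rewrite /lex_pos mulmxDr pactD; apply: lexpos_add. Qed.

Lemma lex_pos0 : ~ lex_pos M s 0.
Proof. by rewrite /lex_pos mulmx0 pact0; apply: lexpos0. Qed.

Lemma lex_posN v : lex_pos M s v -> ~ lex_pos M s (- v).
Proof. by move=> pos_v /(lex_posD pos_v); rewrite subrr; apply: lex_pos0. Qed.

Lemma Loset_lex_pos P x : Loset P M s x <-> lex_pos M s (P - x).
Proof. by rewrite /Loset /lex_pos lex_ltE mulmxBr pactB. Qed.

Lemma Lset_lex_pos P x : (forall y : 'cV[int]_n, M *m y = 0 -> y = 0) ->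
  Lset P M s x <-> x = P \/ lex_pos M s (P - x).
Proof.
move=> M_inj; rewrite /Lset /lex_le; split=> -[eq_x|lt_x].
- left; apply/esym/eqP; rewrite -subr_eq0; apply/eqP/M_inj.
  rewrite mulmxBr; apply/eqP; rewrite subr_eq0.
  by apply/eqP/(pact_inj (s := s)); rewrite eq_x.
- by right; apply/Loset_lex_pos.
- by left; rewrite eq_x.
- by right; apply/Loset_lex_pos.
Qed.

End LexPositivity.

Section Shear.
Variables (n : nat) (k : 'I_n).

Definition shearN : 'M[int]_n := \matrix_(r, c) ((r == k) && (c != k))%:R.

Definition shear : 'M[int]_n := 1%:M - shearN.

Lemma shearN_ebasis l : shearN *m ebasis l = if l == k then 0 else ebasis k.
Proof.
rewrite /ebasis -colE; apply/matrixP => r c.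
case: (l =P k) => [->|/eqP lk]; first by rewrite !mxE eqxx andbF.
by rewrite !mxE lk andbT (ord1 c) eqxx andbT.
Qed.

(* F_k is invertible, with inverse 1 + N_k since N_k^2 = 0. *)
Lemma shear_unit : shear \in unitmx.
Proof.
have N2 : shearN *m shearN = 0.
  apply/matrixP => r c; rewrite !mxE; apply: big1 => i _; rewrite !mxE.
  by case: (i == k); rewrite ?andbF ?andbT /= ?mul0r ?mulr0.
have inv : shear *m (1%:M + shearN) = 1%:M.
  by rewrite mulmxBl !mulmxDr !mul1mx mulmx1 N2 addr0 addrK.
by case: (mulmx1_unit inv).
Qed.

Lemma shear_ek : shear *m ebasis k = ebasis k.
Proof. by rewrite /shear mulmxBl mul1mx shearN_ebasis eqxx subr0. Qed.

Lemma shear_el l : l != k -> shear *m ebasis l = ebasis l - ebasis k.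
Proof. by move=> lk; rewrite /shear mulmxBl mul1mx shearN_ebasis (negbTE lk). Qed.

End Shear.

Lemma entryD n (x y : 'cV[int]_n) i c : (x + y) i c = x i c + y i c.
Proof. by rewrite mxE. Qed.

Lemma entryN n (x : 'cV[int]_n) i c : (- x) i c = - x i c.
Proof. by rewrite mxE. Qed.

Ltac zmod_eq := apply/matrixP => ? ?; rewrite ?(entryD, entryN); ring.

Ltac shear_eq := rewrite ?(mulmxDr, mulmxBr, mulmxN, shear_ek);
  try match goal with lk : is_true (?l != ?k) |- _ => rewrite ?(shear_el lk) end;
  zmod_eq.

(* Prepending a letter k transforms the whole state: a-vectors and B by the affine
   map x |-> F_k x + e_k (B also keeps the linear copy F_k B), δ-vectors by F_k. *)
Definition shift_state n (k : 'I_n) (st : state n) : state n :=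
  let: (a, d, B) := st in
  (fun i => shear k *m a i + ebasis k,
   fun i => shear k *m d i,
   fun x => exists b, B b /\ (x = shear k *m b \/ x = shear k *m b + ebasis k)).

Lemma step_shift n (k j : 'I_n) st :
  step (shift_state k st) j = shift_state k (step st j).
Proof.
case: st => [[a d] B] /=; congr (_, _, _).
- apply: functional_extensionality => i; case: (i == j) => //.
  by rewrite mulmxDr addrAC.
- apply: functional_extensionality => i; case: (i == j) => //.
  by rewrite mulmxBr.
- apply: functional_extensionality => x; apply: propositional_extensionality.
  split=> -[b [[b0 [Bb0 [->|->]]] [->|->]]].
  + by exists b0; split; [exists b0; split; [|left]|left].
  + by exists (b0 + d j); split; [exists b0; split; [|right]|left; rewrite mulmxDr].
  + by exists b0; split; [exists b0; split; [|left]|right].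
  + exists (b0 + d j); split; [exists b0; split; [|right]|right] => //.
    by rewrite mulmxDr addrAC.
  + by exists (shear k *m b0); split; [exists b0; split; [|left]|left].
  + by exists (shear k *m b0 + ebasis k); split; [exists b0; split; [|right]|left].
  + by exists (shear k *m b0); split; [exists b0; split; [|left]|right; rewrite mulmxDr].
  + exists (shear k *m b0 + ebasis k); split; [exists b0; split; [|right]|right] => //.
    by rewrite mulmxDr addrAC.
Qed.

Lemma step0_shift n (k : 'I_n) : step (state0 n) k = shift_state k (state0 n).
Proof.
rewrite /state0 /=; congr (_, _, _).
- apply: functional_extensionality => i; case: (eqVneq i k) => [->|ik].
    by rewrite shear_ek.
  by rewrite shear_el // subrK.
- apply: functional_extensionality => i; case: (eqVneq i k) => [->|ik].
    by rewrite shear_ek.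
  by rewrite shear_el.
- apply: functional_extensionality => x; apply: propositional_extensionality.
  split=> -[b [-> [->|->]]]; exists 0; split=> //; rewrite ?mulmx0 ?add0r.
  all: by [left|right].
Qed.

Lemma wstate_cons n (k : 'I_n) w : wstate (k :: w) = shift_state k (wstate w).
Proof.
rewrite /wstate -[foldl _ _ (k :: w)]/(foldl (@step n) (step (state0 n) k) w).
rewrite step0_shift; elim: w (state0 n) => [|j w IH] st //=.
by rewrite step_shift IH.
Qed.

Section Components.
Variables (n : nat) (w : seq 'I_n).
Implicit Types (k i j : 'I_n) (x : 'cV[int]_n).

Lemma avec_cons k i : avec (k :: w) i = shear k *m avec w i + ebasis k.
Proof. by rewrite /avec wstate_cons; case: (wstate w) => [[a d] B]. Qed.

Lemma dvec_cons k i : dvec (k :: w) i = shear k *m dvec w i.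
Proof. by rewrite /dvec wstate_cons; case: (wstate w) => [[a d] B]. Qed.

Lemma Bset_cons k x : Bset (k :: w) x <->
  exists b, Bset w b /\ (x = shear k *m b \/ x = shear k *m b + ebasis k).
Proof. by rewrite /Bset wstate_cons; case: (wstate w) => [[a d] B]. Qed.

Lemma wstate_rcons j : wstate (rcons w j) = step (wstate w) j.
Proof. by rewrite /wstate foldl_rcons. Qed.

Lemma avec_rcons j : avec (rcons w j) j = avec w j + dvec w j.
Proof.
by rewrite /avec /dvec wstate_rcons; case: (wstate w) => [[a d] B] /=; rewrite eqxx.
Qed.

Lemma dvec_rcons j i :
  dvec (rcons w j) i = if i == j then dvec w j else dvec w i - dvec w j.
Proof. by rewrite /dvec wstate_rcons; case: (wstate w) => [[a d] B]. Qed.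

End Components.

Definition Dmat n (w : seq 'I_n) : 'M[int]_n := \matrix_(r < n, c < n) dvec w c r 0.

Section DeltaMatrix.
Variables (n : nat) (w : seq 'I_n).

Lemma Dmat_ebasis (i : 'I_n) : Dmat w *m ebasis i = dvec w i.
Proof. by rewrite /ebasis -colE; apply/matrixP => r c; rewrite !mxE (ord1 c). Qed.

(* D_{kw} = F_k D_w, so D_w is a product of unimodular shears. *)
Lemma Dmat_unit : Dmat w \in unitmx.
Proof.
elim: w => [|k v IH].
  suff -> : Dmat ([::] : seq 'I_n) = 1%:M by exact: unitmx1.
  by apply/matrixP => r c; rewrite !mxE /dvec /= eqxx andbT.
have -> : Dmat (k :: v) = shear k *m Dmat v.
  apply/matrixP => r c; rewrite !mxE dvec_cons mxE.
  by apply: eq_bigr => i _; rewrite !mxE.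
by rewrite unitmx_mul shear_unit.
Qed.

Lemma Mmat_dvec (i : 'I_n) : Mmat w *m dvec w i = ebasis i.
Proof. by rewrite -Dmat_ebasis mulmxA mulVmx ?Dmat_unit // mul1mx. Qed.

Lemma Mmat_inj (y : 'cV[int]_n) : Mmat w *m y = 0 -> y = 0.
Proof.
move=> My0; rewrite -(mul1mx y) -(mulmxV Dmat_unit) -mulmxA.
by rewrite -[invmx _]/(Mmat w) My0 mulmx0.
Qed.

End DeltaMatrix.

Inductive cone n (w : seq 'I_n) : 'cV[int]_n -> Prop :=
| cone0 : cone w 0
| coneS v i : cone w v -> cone w (v + dvec w i).

Section Cones.
Variable n : nat.
Implicit Types (w : seq 'I_n) (u v : 'cV[int]_n) (i j k l : 'I_n).

Lemma cone_add w u v : cone w u -> cone w v -> cone w (u + v).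
Proof.
move=> cone_u; elim=> [|v' i _ IH]; first by rewrite addr0.
by rewrite addrA; apply: coneS.
Qed.

Lemma cone_shear k w v : cone w v -> cone (k :: w) (shear k *m v).
Proof.
elim=> [|v' i _ IH]; first by rewrite mulmx0; apply: cone0.
by rewrite mulmxDr -dvec_cons; apply: coneS.
Qed.

Lemma cone_ebasis w l : cone w (ebasis l).
Proof.
elim: w l => [|k w IH] l.
  by have := coneS l (cone0 [::]); rewrite add0r.
case: (eqVneq l k) => [->|lk]; first by rewrite -shear_ek; apply: cone_shear.
have -> : ebasis l = shear k *m (ebasis l + ebasis k).
  by rewrite mulmxDr shear_ek shear_el // subrK.
by apply: cone_shear; apply: cone_add.
Qed.

(* The δ's of w*j are δ_j and δ_i - δ_j, so cone w ⊆ cone (w*j). *)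
Lemma cone_rcons w j v : cone w v -> cone (rcons w j) v.
Proof.
elim=> [|v' i _ IH]; first exact: cone0.
case: (eqVneq i j) => [->|ij].
  by have := coneS j IH; rewrite dvec_rcons eqxx.
have := coneS j (coneS i IH); rewrite !dvec_rcons eqxx (negbTE ij).
by rewrite -addrA subrK.
Qed.

Lemma cone_rcons_sub w j v : cone w v -> v <> 0 -> cone (rcons w j) (v - dvec w j).
Proof.
elim=> [|v' i cone_v' IH] // _.
case: (eqVneq v' 0) => [->|v'0].
  rewrite add0r; case: (eqVneq i j) => [->|ij]; first by rewrite subrr; apply: cone0.
  by have := coneS i (cone0 (rcons w j)); rewrite add0r dvec_rcons (negbTE ij).
rewrite addrAC; apply: cone_add (IH (elimN eqP v'0)) _.
by apply: cone_rcons; have := coneS i (cone0 w); rewrite add0r.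
Qed.

End Cones.

Section ConePositivity.
Variables (n : nat) (w : seq 'I_n) (j : 'I_n) (s : 'S_n).
Hypothesis s_j_last : (s j : nat) = n.-1.

Lemma perm_lt_last (i : 'I_n) : i != j -> (s i < s j)%N.
Proof.
move=> ij; rewrite s_j_last; have := ltn_ord (s i).
have : (s i : nat) != s j by rewrite (inj_eq val_inj) (inj_eq perm_inj).
by rewrite s_j_last; lia.
Qed.

(* With j compared last, every δ-vector of w*j is positive for the order given by
   M_w and s: M_w maps them to e_j and to e_i - e_j. *)
Lemma lex_pos_dvec_rcons (i : 'I_n) : lex_pos (Mmat w) s (dvec (rcons w j) i).
Proof.
rewrite /lex_pos dvec_rcons; have [_|ij] := eqVneq i j.
  by rewrite Mmat_dvec pact_ebasis; apply: lexpos_ebasis.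
rewrite mulmxBr !Mmat_dvec pactB !pact_ebasis.
exact: lexpos_ebasisB (perm_lt_last ij).
Qed.

Lemma cone_rcons_lex_pos v : cone (rcons w j) v -> v = 0 \/ lex_pos (Mmat w) s v.
Proof.
elim=> [|v' i _ [->|pos_v']]; [by left|right|right].
  by rewrite add0r; apply: lex_pos_dvec_rcons.
exact: lex_posD pos_v' (lex_pos_dvec_rcons i).
Qed.

Lemma cone_rcons_not_neg v : cone (rcons w j) v -> ~ lex_pos (Mmat w) s (- v).
Proof.
by case/cone_rcons_lex_pos => [->|/lex_posN //]; rewrite oppr0; apply: lex_pos0.
Qed.

Lemma lex_pos_dvec_last : lex_pos (Mmat w) s (dvec w j).
Proof. by have := lex_pos_dvec_rcons j; rewrite dvec_rcons eqxx. Qed.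

Lemma cone_rcons_add_pos u v :
  cone (rcons w j) u -> lex_pos (Mmat w) s v -> lex_pos (Mmat w) s (u + v).
Proof. by case/cone_rcons_lex_pos=> [->|pos_u] pos_v; [rewrite add0r|apply: lex_posD]. Qed.

End ConePositivity.

(* The corner C = a^j_w - δ^j_w of B_w, the vertex of its box opposite to 0. *)
Definition corner n (w : seq 'I_n) (j : 'I_n) : 'cV[int]_n := avec w j - dvec w j.

Lemma corner_cons n (k : 'I_n) w j : corner (k :: w) j = shear k *m corner w j + ebasis k.
Proof. by rewrite /corner avec_cons dvec_cons mulmxBr addrAC. Qed.

Lemma corner_nil n (j : 'I_n) : corner [::] j = 0.
Proof. exact: subrr. Qed.

Section ConsStep.
Variables (n : nat) (k : 'I_n) (w : seq 'I_n).
Implicit Types (b x : 'cV[int]_n) (l : 'I_n).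

Lemma Bset_cons_lin b : Bset w b -> Bset (k :: w) (shear k *m b).
Proof. by move=> Bb; apply/Bset_cons; exists b; split=> //; left. Qed.

Lemma Bset_cons_aff b : Bset w b -> Bset (k :: w) (shear k *m b + ebasis k).
Proof. by move=> Bb; apply/Bset_cons; exists b; split=> //; right. Qed.

(* The exits of B_w through an upper face lie above the corner, and this is
   preserved when k is prepended. *)
Lemma exit_up_cons (C : 'cV[int]_n) :
  (forall b l, Bset w b -> ~ Bset w (b + ebasis l) -> cone w (b + ebasis l - C)) ->
  forall x l, Bset (k :: w) x -> ~ Bset (k :: w) (x + ebasis l) ->
    cone (k :: w) (x + ebasis l - (shear k *m C + ebasis k)).
Proof.
move=> up x l /Bset_cons [b [Bb [->|->]]]; have [-> | lk] := eqVneq l k => out.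
- by case: out; apply: Bset_cons_aff.
- have [Bbl|nBbl] := classic (Bset w (b + ebasis l)).
    case: out; have -> : shear k *m b + ebasis l = shear k *m (b + ebasis l) + ebasis k.
      by shear_eq.
    exact: Bset_cons_aff.
  have -> : shear k *m b + ebasis l - (shear k *m C + ebasis k) =
            shear k *m (b + ebasis l - C) by shear_eq.
  exact/cone_shear/up.
- have [Bbk|nBbk] := classic (Bset w (b + ebasis k)).
    case: out; have -> : shear k *m b + ebasis k + ebasis k =
                         shear k *m (b + ebasis k) + ebasis k by shear_eq.
    exact: Bset_cons_aff.
  have -> : shear k *m b + ebasis k + ebasis k - (shear k *m C + ebasis k) =
            shear k *m (b + ebasis k - C) by shear_eq.
  exact/cone_shear/up.
- have [Bbl|nBbl] := classic (Bset w (b + ebasis l)); last first.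
    have -> : shear k *m b + ebasis k + ebasis l - (shear k *m C + ebasis k) =
              shear k *m (b + ebasis l - C) + ebasis k by shear_eq.
    exact: cone_add (cone_shear _ (up _ _ Bb nBbl)) (cone_ebasis _ _).
  have [Bblk|nBblk] := classic (Bset w (b + ebasis l + ebasis k)).
    case: out; have -> : shear k *m b + ebasis k + ebasis l =
                         shear k *m (b + ebasis l + ebasis k) + ebasis k by shear_eq.
    exact: Bset_cons_aff.
  have -> : shear k *m b + ebasis k + ebasis l - (shear k *m C + ebasis k) =
            shear k *m (b + ebasis l + ebasis k - C) by shear_eq.
  exact/cone_shear/up.
Qed.

(* The exits of B_w through a lower face lie below 0; preserved by prepending k. *)
Lemma exit_down_cons :
  (forall b l, Bset w b -> ~ Bset w (b - ebasis l) -> cone w (ebasis l - b)) ->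
  forall x l, Bset (k :: w) x -> ~ Bset (k :: w) (x - ebasis l) ->
    cone (k :: w) (ebasis l - x).
Proof.
move=> down x l /Bset_cons [b [Bb [->|->]]]; have [-> | lk] := eqVneq l k => out.
- have [Bbk|nBbk] := classic (Bset w (b - ebasis k)).
    case: out; have -> : shear k *m b - ebasis k = shear k *m (b - ebasis k) by shear_eq.
    exact: Bset_cons_lin.
  have -> : ebasis k - shear k *m b = shear k *m (ebasis k - b) by shear_eq.
  exact/cone_shear/down.
- have [Bbl|nBbl] := classic (Bset w (b - ebasis l)); last first.
    have -> : ebasis l - shear k *m b = shear k *m (ebasis l - b) + ebasis k by shear_eq.
    exact: cone_add (cone_shear _ (down _ _ Bb nBbl)) (cone_ebasis _ _).
  have [Bblk|nBblk] := classic (Bset w (b - ebasis l - ebasis k)).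
    case: out; have -> : shear k *m b - ebasis l = shear k *m (b - ebasis l - ebasis k).
      by shear_eq.
    exact: Bset_cons_lin.
  have -> : ebasis l - shear k *m b = shear k *m (ebasis k - (b - ebasis l)) by shear_eq.
  exact/cone_shear/down.
- by case: out; rewrite addrK; apply: Bset_cons_lin.
- have [Bbl|nBbl] := classic (Bset w (b - ebasis l)).
    case: out; have -> : shear k *m b + ebasis k - ebasis l = shear k *m (b - ebasis l).
      by shear_eq.
    exact: Bset_cons_lin.
  have -> : ebasis l - (shear k *m b + ebasis k) = shear k *m (ebasis l - b) by shear_eq.
  exact/cone_shear/down.
Qed.

End ConsStep.

Section BoxInvariants.
Variable n : nat.
Implicit Types (w : seq 'I_n) (j l : 'I_n) (b : 'cV[int]_n).

Lemma Bset_zero w : Bset w 0.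
Proof. by elim: w => [|k w IH] //; have := Bset_cons_lin k IH; rewrite mulmx0. Qed.

Lemma Bset_corner w j : Bset w (corner w j).
Proof.
elim: w => [|k w IH]; first by rewrite corner_nil.
by rewrite corner_cons; apply: Bset_cons_aff.
Qed.

Lemma Bset_cone w b : Bset w b -> cone w b.
Proof.
elim: w b => [|k w IH] b; first by move=> ->; apply: cone0.
case/Bset_cons=> b' [/IH cone_b' [->|->]]; first exact: cone_shear.
exact: cone_add (cone_shear _ cone_b') (cone_ebasis _ _).
Qed.

Lemma Bset_below_corner w j b : Bset w b -> cone w (corner w j - b).
Proof.
elim: w b => [|k w IH] b; first by move=> ->; rewrite corner_nil subrr; apply: cone0.
rewrite corner_cons; case/Bset_cons=> b' [/IH cone_b' [->|->]].
  have -> : shear k *m corner w j + ebasis k - shear k *m b' =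
            shear k *m (corner w j - b') + ebasis k by shear_eq.
  exact: cone_add (cone_shear _ cone_b') (cone_ebasis _ _).
have -> : shear k *m corner w j + ebasis k - (shear k *m b' + ebasis k) =
          shear k *m (corner w j - b') by shear_eq.
exact: cone_shear.
Qed.

Lemma Bset_exit_up w j b l :
  Bset w b -> ~ Bset w (b + ebasis l) -> cone w (b + ebasis l - corner w j).
Proof.
elim: w b l => [|k w IH] b l.
  by move=> -> _; rewrite corner_nil add0r subr0; apply: cone_ebasis.
by rewrite corner_cons => Bb out; apply: (exit_up_cons IH Bb out).
Qed.

Lemma Bset_exit_down w b l :
  Bset w b -> ~ Bset w (b - ebasis l) -> cone w (ebasis l - b).
Proof.
elim: w b l => [|k w IH] b l; last by move=> Bb out; apply: (exit_down_cons IH Bb out).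
by move=> -> _; rewrite subr0; apply: cone_ebasis.
Qed.

End BoxInvariants.

Section Adjacency.
Variable n : nat.
Implicit Types (x y : 'cV[int]_n) (l : 'I_n).

Lemma adj_sym x y : adj x y = adj y x.
Proof. by rewrite /adj; congr (_ == _); apply: eq_bigr => i _; rewrite -opprB sqrrN. Qed.

Lemma adj_add x l : adj x (x + ebasis l).
Proof.
rewrite /adj (bigD1 l) //= big1 ?addr0 => [|i il].
  by rewrite !mxE !eqxx opprD addrA subrr sub0r sqrrN expr1n.
by rewrite !mxE (negbTE il) addr0 subrr expr0n.
Qed.

Lemma adj_sub x l : adj x (x - ebasis l).
Proof. by rewrite adj_sym -{2}(subrK (ebasis l) x) adj_add. Qed.

Lemma sum_sqr_eq1 (f : 'I_n -> int) : \sum_i f i ^+ 2 = 1 ->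
  exists l, (f l = 1 \/ f l = -1) /\ forall i, i != l -> f i = 0.
Proof.
move=> sum1; have [l fl0] : exists l, f l != 0.
  apply: NNPP => all0; move: sum1; rewrite big1 // => i _.
  case: (f i =P 0) => [-> | /eqP fi0]; [by rewrite expr0n | by case: all0; exists i].
rewrite (bigD1 l) //= in sum1.
have rest_ge0 : 0 <= \sum_(i | i != l) f i ^+ 2 by apply: sumr_ge0 => i _; apply: sqr_ge0.
have fl_ge1 : 1 <= f l ^+ 2 by rewrite expr2; move: fl0; rewrite neq_lt => /orP[] ?; nia.
have [fl1 rest0] : f l ^+ 2 = 1 /\ \sum_(i | i != l) f i ^+ 2 = 0.
  by move: sum1 rest_ge0 fl_ge1; move: (f l ^+ 2) (\sum_(i | i != l) f i ^+ 2); lia.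
exists l; split; first by move/eqP: fl1; rewrite sqrf_eq1 => /orP[]/eqP; [left|right].
move=> i il; apply/eqP; rewrite -sqrf_eq0; apply/eqP.
by apply: (psumr_eq0P _ rest0) => // m _; apply: sqr_ge0.
Qed.

Lemma adj_inv x y : adj x y -> exists l, y = x + ebasis l \/ y = x - ebasis l.
Proof.
move=> /eqP /sum_sqr_eq1 [l [fl rest]]; exists l.
have entry i : y i 0 = x i 0 - (x i 0 - y i 0) by rewrite opprB addrC subrK.
case: fl => fl; [right|left]; apply/matrixP => i c; rewrite (ord1 c) !mxE entry.
all: by case: (eqVneq i l) => [->|il]; rewrite ?fl ?rest ?subr0 ?addr0 //= ?opprK.
Qed.

End Adjacency.

Inductive reach n (S : 'cV[int]_n -> Prop) : 'cV[int]_n -> Prop :=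
| reach0 : reach S 0
| reachS x y : reach S x -> S y -> adj x y -> reach S y.

Section Connectedness.
Variables (n : nat) (k : 'I_n) (w : seq 'I_n).

Lemma reach_in (S : 'cV[int]_n -> Prop) x : S 0 -> reach S x -> S x.
Proof. by move=> S0; case. Qed.

(* A path in B_w is mapped by F_k to a path in B_{kw}, after inserting the detour
   through F_k x + e_k at each step in a direction other than e_k. *)
Lemma reach_shear b : reach (Bset w) b -> reach (Bset (k :: w)) (shear k *m b).
Proof.
elim=> [|x y reach_x IH By adj_xy]; first by rewrite mulmx0; apply: reach0.
have Bx := reach_in (Bset_zero w) reach_x.
have reach_aff : reach (Bset (k :: w)) (shear k *m x + ebasis k).
  exact: reachS IH (Bset_cons_aff k Bx) (adj_add _ _).
case: (adj_inv adj_xy) => l [] ey; subst y; have [eq_lk | lk] := eqVneq l k; try subst l.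
- apply: reachS IH (Bset_cons_lin k By) _.
  by rewrite mulmxDr shear_ek; apply: adj_add.
- have reach_l : reach (Bset (k :: w)) (shear k *m x + ebasis l).
    apply: reachS IH _ (adj_add _ _).
    have -> : shear k *m x + ebasis l = shear k *m (x + ebasis l) + ebasis k by shear_eq.
    exact: Bset_cons_aff.
  apply: reachS reach_l (Bset_cons_lin k By) _.
  have -> : shear k *m (x + ebasis l) = shear k *m x + ebasis l - ebasis k by shear_eq.
  exact: adj_sub.
- apply: reachS IH (Bset_cons_lin k By) _.
  by rewrite mulmxBr shear_ek; apply: adj_sub.
- apply: reachS reach_aff (Bset_cons_lin k By) _.
  have -> : shear k *m (x - ebasis l) = shear k *m x + ebasis k - ebasis l by shear_eq.
  exact: adj_sub.
Qed.

End Connectedness.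

Lemma Bset_reach n (w : seq 'I_n) b : Bset w b -> reach (Bset w) b.
Proof.
elim: w b => [|k w IH] b; first by move=> ->; apply: reach0.
case/Bset_cons=> b' [/IH reach_b' [->|->]]; first exact: reach_shear.
exact: reachS (reach_shear k reach_b') (Bset_cons_aff k (reach_in (Bset_zero w) reach_b'))
  (adj_add _ _).
Qed.

Lemma Comp0_eq n (X S : 'cV[int]_n -> Prop) :
  S 0 -> (forall x, S x -> X x) -> (forall x, S x -> reach S x) ->
  (forall x z, S x -> adj x z -> X z -> S z) ->
  forall x, S x <-> Comp0 X x.
Proof.
move=> S0 SX S_reach S_closed x; split.
  move=> /S_reach; elim=> [|y z _ [p [X0 Xp path_p last_p]] Sz adj_yz].
    by exists [::]; split=> //; apply: SX.
  exists (rcons p z); split=> //; last by rewrite last_rcons.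
    by move=> u; rewrite mem_rcons in_cons => /orP[/eqP ->|/Xp]; [apply: SX|].
  by rewrite rcons_path path_p last_p.
move=> [p [_ Xp path_p <-]]; elim: p 0 S0 path_p Xp => [|z p IH] y Sy //=.
move=> /andP[adj_yz path_p] Xp.
have Sz : S z by apply: S_closed Sy adj_yz (Xp z (mem_head z p)).
by apply: IH Sz path_p _ => u up; apply: Xp; rewrite in_cons up orbT.
Qed.

Lemma Bset_Comp0 n (v : seq 'I_n) (j : 'I_n) (X : 'cV[int]_n -> Prop) :
  (forall x, cone v x -> cone v (corner v j - x) -> X x) ->
  (forall z, z <> corner v j -> cone v (z - corner v j) -> ~ X z) ->
  (forall z, z <> 0 -> cone v (- z) -> ~ X z) ->
  forall x, Bset v x <-> Comp0 X x.
Proof.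
move=> X_box not_above not_below; apply: Comp0_eq (Bset_zero v) _ (@Bset_reach n v) _.
  by move=> x Bx; apply: X_box (Bset_cone Bx) (Bset_below_corner j Bx).
move=> x z Bx /adj_inv [l [] ->] Xz; apply: NNPP => out.
  apply: (not_above _ _ (Bset_exit_up j Bx out) Xz) => eq_z.
  by apply: out; rewrite eq_z; apply: Bset_corner.
have cone_z : cone v (- (x - ebasis l)) by rewrite opprB; apply: Bset_exit_down.
apply: (not_below _ _ cone_z Xz) => eq_z.
by apply: out; rewrite eq_z; apply: Bset_zero.
Qed.

Lemma corner_rcons n (w : seq 'I_n) (j : 'I_n) : corner (rcons w j) j = avec w j.
Proof. by rewrite /corner avec_rcons dvec_rcons eqxx addrK. Qed.

Section MainTheorem.
Variables (n : nat) (w : seq 'I_n) (j : 'I_n) (s : 'S_n).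
Hypothesis s_j_last : (s j : nat) = n.-1.

(* First claim: B_w is the 0-component of L°(a^j_w) minus L°(0); here
   a^j_w = C + δ_j, so its box lies strictly below a^j_w. *)
Lemma Bset_Comp0_open x :
  Bset w x <-> Comp0 (setminus (Loset (avec w j) (Mmat w) s) (Loset 0 (Mmat w) s)) x.
Proof.
have a_corner : avec w j = corner w j + dvec w j by rewrite subrK.
apply: (Bset_Comp0 (j := j)) => [y cone_y cone_Cy | z zC cone_zC | z z0 cone_z];
  rewrite /setminus !Loset_lex_pos sub0r.
- split; last exact/(cone_rcons_not_neg s_j_last)/cone_rcons.
  rewrite a_corner addrAC.
  apply: (cone_rcons_add_pos s_j_last (cone_rcons j cone_Cy)).
  exact: lex_pos_dvec_last.
- case=> pos_az _; have zC0 : z - corner w j <> 0 by move/eqP; rewrite subr_eq0 => /eqP.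
  apply: (cone_rcons_not_neg s_j_last (cone_rcons_sub j cone_zC zC0)).
  have -> : - (z - corner w j - dvec w j) = avec w j - z by rewrite a_corner; zmod_eq.
  exact: pos_az.
- case=> _; apply; case: (cone_rcons_lex_pos s_j_last (cone_rcons j cone_z)) => //.
  by move/eqP; rewrite oppr_eq0 => /eqP.
Qed.

(* Second claim: B_{w*j} is the 0-component of L(a^j_w) minus L°(0); here the
   corner of B_{w*j} is a^j_w itself and all nonzero elements of cone (w*j) are
   positive. *)
Lemma Bset_Comp0_closed x :
  Bset (rcons w j) x <->
  Comp0 (setminus (Lset (avec w j) (Mmat w) s) (Loset 0 (Mmat w) s)) x.
Proof.
have nonneg v : cone (rcons w j) v -> v = 0 \/ lex_pos (Mmat w) s v.
  exact: cone_rcons_lex_pos.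
apply: (Bset_Comp0 (j := j)) => [y cone_y cone_ay | z za cone_za | z z0 cone_z];
  rewrite /setminus (Lset_lex_pos _ _ _ (@Mmat_inj n w)) Loset_lex_pos sub0r.
- rewrite corner_rcons in cone_ay; split; last exact (cone_rcons_not_neg s_j_last cone_y).
  case: (nonneg _ cone_ay) => [/eqP|]; last by right.
  by rewrite subr_eq0 => /eqP ->; left.
- rewrite corner_rcons in za cone_za.
  case: (nonneg _ cone_za) => [/eqP|pos_za]; first by rewrite subr_eq0 => /eqP.
  by case=> -[//|/lex_posN]; rewrite opprB.
- case=> _; apply; case: (nonneg _ cone_z) => //.
  by move/eqP; rewrite oppr_eq0 => /eqP.
Qed.

End MainTheorem.

Theorem lemma3p7 (n : nat) (w : seq 'I_n) (j : 'I_n) (s : 'S_n) :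
  (s j : nat) = n.-1 ->
  (forall x, Bset w x <->
     Comp0 (setminus (Loset (avec w j) (Mmat w) s) (Loset 0 (Mmat w) s)) x) /\
  (forall x, Bset (rcons w j) x <->
     Comp0 (setminus (Lset (avec w j) (Mmat w) s) (Loset 0 (Mmat w) s)) x).
Proof. by move=> s_j_last; split; [apply: Bset_Comp0_open | apply: Bset_Comp0_closed]. Qed.
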